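(* Suppose $(X_A,\sigma_A)$ and $(X_B,\sigma_B)$ are continuously orbit equivalent via a homeomorphism $h:X_A\to X_B$ with continuous $k_1,l_1:X_A\to\mathbb Z_+$ and $k_2,l_2:X_B\to\mathbb Z_+$ as in the context. Then for all $m\in\mathbb Z_+$, $f\in C(X_B,\mathbb Z)$ and $g\in C(X_A,\mathbb Z)$: (i) for all $x\in X_A$, $\Psi_h(f)^m(x)=f^{l_1^m(x)}(h(x))-f^{k_1^m(x)}(h(\sigma_A^m(x)))$, and $g^m(x)=\Psi_{h^{-1}}(g)^{l_1^m(x)}(h(x))-\Psi_{h^{-1}}(g)^{k_1^m(x)}(h(\sigma_A^m(x)))$; (ii) for all $y\in X_B$, $\Psi_{h^{-1}}(g)^m(y)=g^{l_2^m(y)}(h^{-1}(y))-g^{k_2^m(y)}(h^{-1}(\sigma_B^m(y)))$, and $f^m(y)=\Psi_h(f)^{l_2^m(y)}(h^{-1}(y))-\Psi_h(f)^{k_2^m(y)}(h^{-1}(\sigma_B^m(y)))$.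
   Context: Let $N,M>1$ and let $A$ ($N\times N$), $B$ ($M\times M$) be irreducible $\{0,1\}$-matrices which are not permutation matrices. $X_A$ is the compact space of sequences $(x_n)_{n\in\mathbb N}$ with $x_n\in\{1,\dots,N\}$, $A(x_n,x_{n+1})=1$, and $\sigma_A((x_n)_n)=(x_{n+1})_n$; similarly $(X_B,\sigma_B)$. $\mathbb Z_+$ denotes the nonnegative integers. For a function $u$ on $X_A$ (resp. $X_B$) and $n\in\mathbb Z_+$, $u^n(x)=\sum_{i=0}^{n-1}u(\sigma_A^i(x))$ (resp. with $\sigma_B$), so $u^0=0$. Continuous orbit equivalence via $h$: $h:X_A\to X_B$ is a homeomorphism and $k_1,l_1:X_A\to\mathbb Z_+$, $k_2,l_2:X_B\to\mathbb Z_+$ are continuous with $\sigma_B^{k_1(x)}(h(\sigma_A(x)))=\sigma_B^{l_1(x)}(h(x))$ for all $x\in X_A$ and $\sigma_A^{k_2(y)}(h^{-1}(\sigma_B(y)))=\sigma_A^{l_2(y)}(h^{-1}(y))$ for all $y\in X_B$. Define $\Psi_h:C(X_B,\mathbb Z)\to C(X_A,\mathbb Z)$ by $\Psi_h(f)(x)=\sum_{i=0}^{l_1(x)-1}f(\sigma_B^i(h(x)))-\sum_{j=0}^{k_1(x)-1}f(\sigma_B^j(h(\sigma_A(x))))$, and $\Psi_{h^{-1}}:C(X_A,\mathbb Z)\to C(X_B,\mathbb Z)$ by $\Psi_{h^{-1}}(g)(y)=\sum_{i=0}^{l_2(y)-1}g(\sigma_A^i(h^{-1}(y)))-\sum_{j=0}^{k_2(y)-1}g(\sigma_A^j(h^{-1}(\sigma_B(y))))$.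 Here $l_1^m,k_1^m$ (resp. $l_2^m,k_2^m$) are the Birkhoff sums of $l_1,k_1$ over $\sigma_A$ (resp. of $l_2,k_2$ over $\sigma_B$). *)

From mathcomp Require Import all_boot all_order all_algebra all_fingroup.
Set Implicit Arguments. Unset Strict Implicit. Unset Printing Implicit Defensive.
Import GRing.Theory Num.Theory.
Local Open Scope ring_scope.

Definition zero_one_mx (N : nat) (A : 'M[int]_N) : Prop :=
  forall i j, A i j = 0 \/ A i j = 1.

Definition irreducible_mx (N : nat) (A : 'M[int]_N) : Prop :=
  forall i j : 'I_N, exists n : nat, (0 < n)%N /\ 0 < (A ^+ n) i j.

Definition in_XA (N : nat) (A : 'M[int]_N) (x : nat -> 'I_N) : Prop :=
  forall n, A (x n) (x n.+1) = 1.

Definition XA (N : nat) (A : 'M[int]_N) := {x : nat -> 'I_N | in_XA A x}.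

Lemma in_XA_shift (N : nat) (A : 'M[int]_N) (x : XA A) :
  in_XA A (fun n => proj1_sig x n.+1).
Proof. by move=> n; exact: (proj2_sig x n.+1). Qed.

Definition shiftA (N : nat) (A : 'M[int]_N) (x : XA A) : XA A :=
  exist _ (fun n => proj1_sig x n.+1) (in_XA_shift x).

Definition agree (N : nat) (A : 'M[int]_N) (n : nat) (x x' : XA A) : Prop :=
  forall i, (i < n)%N -> proj1_sig x i = proj1_sig x' i.

(* continuity (product topology) of a map between shift spaces *)
Definition cont_map (N M : nat) (A : 'M[int]_N) (B : 'M[int]_M)
  (h : XA A -> XA B) : Prop :=
  forall (x : XA A) (m : nat), exists n : nat,
    forall x' : XA A, agree n x x' -> agree m (h x) (h x').

(* continuity of a map into a discrete space (Z, Z_+) *)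
Definition cont_disc (N : nat) (A : 'M[int]_N) (T : Type) (F : XA A -> T) : Prop :=
  forall x : XA A, exists n : nat, forall x' : XA A, agree n x x' -> F x' = F x.

Definition birk (T : Type) (sigma : T -> T) (u : T -> int) (n : nat) (x : T) : int :=
  \sum_(i < n) u (iter i sigma x).
Definition birkn (T : Type) (sigma : T -> T) (u : T -> nat) (n : nat) (x : T) : nat :=
  (\sum_(i < n) u (iter i sigma x))%N.

Definition Psi (S T : Type) (sS : S -> S) (sT : T -> T) (h : S -> T)
  (k l : S -> nat) (f : T -> int) (x : S) : int :=
  birk sT f (l x) (h x) - birk sT f (k x) (h (sS x)).

(* The cocycle relation sigma_B^(k1 x) (h (sigma_A x)) = sigma_B^(l1 x) (h x)
   iterates to sigma_B^(l1^m x) (h x) = sigma_B^(k1^m x) (h (sigma_A^m x)), along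
   which the Birkhoff sums of Psi_h f telescope; this gives the first identities
   of (i) and (ii).  The second ones follow once Psi_h (Psi_hinv g) = g and
   symmetrically.  Unfolding Psi_h (Psi_hinv g) x with the first identity leaves
   two differences of Birkhoff sums of g along orbits that meet, and they cancel
   to g x provided the four exponents p, q, r, s involved satisfy p + s = q + r + 1.
   The cocycle relations give sigma_A^(p + s) x = sigma_A^(q + r + 1) x, with
   exponents locally constant in x; as an irreducible non-permutation shift has
   no isolated points, two shift powers agreeing on a cylinder have equal
   exponents. *)

From mathcomp Require Import all_boot all_order all_algebra all_fingroup.
From mathcomp Require Import zify.
Import Order.TTheory GRing.Theory Num.Theory.
Set Implicit Arguments. Unset Strict Implicit. Unset Printing Implicit Defensive.
Local Open Scope ring_scope.

Lemma iterC (T : Type) (f : T -> T) m n x :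
  iter m f (iter n f x) = iter n f (iter m f x).
Proof. by rewrite -!iterD addnC. Qed.

Section Birkhoff.
Variables (T : Type) (sigma : T -> T).

Lemma birkS u n x : birk sigma u n.+1 x = birk sigma u n x + u (iter n sigma x).
Proof. by rewrite /birk big_ord_recr. Qed.

Lemma birkSr u n x : birk sigma u n.+1 x = u x + birk sigma u n (sigma x).
Proof. by rewrite /birk big_ord_recl; congr (_ + _); apply: eq_bigr => i _; rewrite iterSr. Qed.

Lemma birkD u m n x :
  birk sigma u (m + n) x = birk sigma u m x + birk sigma u n (iter m sigma x).
Proof. by rewrite /birk big_split_ord; congr (_ + _); apply: eq_bigr => i _; rewrite /= addnC iterD. Qed.

Lemma birknS u n x : birkn sigma u n.+1 x = (birkn sigma u n x + u (iter n sigma x))%N.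
Proof. by rewrite /birkn big_ord_recr. Qed.

Lemma eq_birk u v : u =1 v -> birk sigma u =2 birk sigma v.
Proof. by move=> uv n x; apply: eq_bigr => i _; rewrite uv. Qed.

(* Past the common point both sums run along the same orbit, so only the
   balance a - b matters. *)
Lemma birk_diff_balanced u z w a b a' b' :
  iter a sigma z = iter b sigma w -> iter a' sigma z = iter b' sigma w ->
  (a + b' = a' + b)%N ->
  birk sigma u a z - birk sigma u b w = birk sigma u a' z - birk sigma u b' w.
Proof.
wlog le_aa' : a b a' b' / (a <= a')%N.
  move=> wlog_le Eab Eab' bal; case: (leqP a a') => [|/ltnW] le.
    exact: wlog_le.
  by symmetry; apply: wlog_le => //; lia.
move=> Eab _ bal.
have -> : a' = (a + (a' - a))%N by lia.
have -> : b' = (b + (a' - a))%N by lia.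
by rewrite !birkD Eab opprD addrACA subrr addr0.
Qed.

End Birkhoff.

Section Cocycle.
Variables (S T : Type) (sS : S -> S) (sT : T -> T) (h : S -> T) (k l : S -> nat).
Hypothesis orbit_eq : forall x, iter (k x) sT (h (sS x)) = iter (l x) sT (h x).

Lemma iter_birkn_cocycle m x :
  iter (birkn sS l m x) sT (h x) = iter (birkn sS k m x) sT (h (iter m sS x)).
Proof.
elim: m => [|m IHm]; first by rewrite /birkn !big_ord0.
by rewrite !birknS /= addnC iterD IHm iterC -orbit_eq -iterD addnC iterD.
Qed.

Lemma birk_Psi f m x :
  birk sS (Psi sS sT h k l f) m x =
  birk sT f (birkn sS l m x) (h x) - birk sT f (birkn sS k m x) (h (iter m sS x)).
Proof.
elim: m => [|m IHm]; first by rewrite /birk /birkn !big_ord0 subrr.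
rewrite birkS IHm !birknS /Psi /= birkD iter_birkn_cocycle (addnC (birkn _ _ _ _)).
rewrite birkD orbit_eq.
set y := iter m sS x; set K := birkn sS k m x.
have swap : birk sT f K (h y) + birk sT f (l y) (iter K sT (h y)) =
            birk sT f (l y) (h y) + birk sT f K (iter (l y) sT (h y)).
  by rewrite -!birkD addnC.
lia.
Qed.

End Cocycle.

Section PsiInverse.
Variables (S T : Type) (sS : S -> S) (sT : T -> T).
Variables (h : S -> T) (k l : S -> nat) (hinv : T -> S) (k' l' : T -> nat).
Hypothesis orbit_eq : forall x, iter (k x) sT (h (sS x)) = iter (l x) sT (h x).
Hypothesis orbit_eq' : forall y, iter (k' y) sS (hinv (sT y)) = iter (l' y) sS (hinv y).
Hypothesis hK : cancel h hinv.

Lemma iter_birkn_inv_l x :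
  iter (birkn sT l' (l x) (h x)) sS x =
  iter (birkn sT k' (l x) (h x)) sS (hinv (iter (k x) sT (h (sS x)))).
Proof. by have := iter_birkn_cocycle orbit_eq' (l x) (h x); rewrite hK orbit_eq. Qed.

Lemma iter_birkn_inv_k x :
  iter (birkn sT l' (k x) (h (sS x))) sS (sS x) =
  iter (birkn sT k' (k x) (h (sS x))) sS (hinv (iter (k x) sT (h (sS x)))).
Proof. by have := iter_birkn_cocycle orbit_eq' (k x) (h (sS x)); rewrite hK. Qed.

Lemma iter_birkn_loop x :
  iter (birkn sT l' (l x) (h x) + birkn sT k' (k x) (h (sS x))) sS x =
  iter (birkn sT k' (l x) (h x) + birkn sT l' (k x) (h (sS x))).+1 sS x.
Proof.
by rewrite addnC iterD iter_birkn_inv_l iterC -iter_birkn_inv_k -iterSr -iterD addnS.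
Qed.

Lemma Psi_cancel g x :
  (birkn sT l' (l x) (h x) + birkn sT k' (k x) (h (sS x)) =
   (birkn sT k' (l x) (h x) + birkn sT l' (k x) (h (sS x))).+1)%N ->
  Psi sS sT h k l (Psi sT sS hinv k' l' g) x = g x.
Proof.
move=> balance; rewrite /Psi !(birk_Psi orbit_eq') !hK -orbit_eq.
have inv_k := iter_birkn_inv_k x; rewrite -iterSr in inv_k.
rewrite (birk_diff_balanced _ (iter_birkn_inv_l x) inv_k); last by lia.
by rewrite birkSr opprB addrA addrNK addrK.
Qed.

End PsiInverse.

Section ShiftSpace.
Variables (N : nat) (A : 'M[int]_N).
Local Notation sA := (@shiftA N A).

Lemma iter_shiftA_val e (x : XA A) i :
  proj1_sig (iter e sA x) i = proj1_sig x (i + e)%N.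
Proof. by elim: e i => [|e IHe] i; rewrite ?addn0 // iterS /= IHe addSnnS. Qed.

Lemma agree_le m n (x y : XA A) : (m <= n)%N -> agree n x y -> agree m x y.
Proof. by move=> le_mn xy i lt_im; apply: xy; apply: leq_trans le_mn. Qed.

Lemma agree_iter_shiftA n e (x y : XA A) :
  agree (n + e) x y -> agree n (iter e sA x) (iter e sA y).
Proof. by move=> xy i lt_in; rewrite !iter_shiftA_val; apply: xy; rewrite ltn_add2r. Qed.

Hypotheses (A01 : zero_one_mx A) (Airr : irreducible_mx A) (Anp : ~~ is_perm_mx A).

Lemma path_of_mx_pow_gt0 n i j : 0 < (A ^+ n) i j ->
  exists w : nat -> 'I_N,
    [/\ w 0%N = i, w n = j & forall t, (t < n)%N -> A (w t) (w t.+1) = 1].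
Proof.
elim: n j => [|n IHn] j.
  by rewrite expr0 mxE; case: eqP => [->|] // _; exists (fun=> j).
rewrite exprSr -mulmxE mxE => sum_gt0.
have [c] : exists c, 0 < (A ^+ n) i c * A c j.
  apply/existsP; apply: contraTT sum_gt0 => /existsPn all_le0.
  by rewrite -leNgt; apply: sumr_le0 => c _; rewrite leNgt all_le0.
have [-> | Acj] := A01 c j; first by rewrite mulr0 ltxx.
rewrite Acj mulr1 => /IHn [w [w0 wn wA]].
exists (fun t => if (t <= n)%N then w t else j); split=> [||t]; rewrite ?ltnn //.
rewrite ltnS => le_tn; rewrite le_tn; case: ltnP => [|le_nt]; first exact: wA.
have /eqP -> : t == n by rewrite eqn_leq le_tn le_nt.
by rewrite wn.
Qed.

Lemma exists_succ i : exists j, A i j = 1.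
Proof.
have [n [n_gt0 /path_of_mx_pow_gt0 [w [w0 _ wA]]]] := Airr i i.
by exists (w 1%N); rewrite -w0; apply: wA.
Qed.

Lemma exists_pred j : exists i, A i j = 1.
Proof.
have [n [n_gt0 /path_of_mx_pow_gt0 [w [_ wn wA]]]] := Airr j j.
exists (w n.-1); have := wA n.-1; rewrite prednK // wn; apply.
exact: leqnn.
Qed.

Definition succ i := odflt i [pick j | A i j == 1].

Lemma succP i : A i (succ i) = 1.
Proof.
rewrite /succ; case: pickP => [j /eqP //|no_succ].
by have [j Aij] := exists_succ i; move: (no_succ j); rewrite Aij eqxx.
Qed.

Lemma exists_branching : exists b c1 c2, [/\ c1 != c2, A b c1 = 1 & A b c2 = 1].
Proof.
case: (boolP [exists b, exists c1, exists c2, [&& c1 != c2, A b c1 == 1 & A b c2 == 1]]).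
  move=> /existsP [b /existsP [c1 /existsP [c2 /and3P [c12 /eqP Ab1 /eqP Ab2]]]].
  by exists b, c1, c2.
move=> /existsPn no_branch; exfalso; move/negP: Anp; apply.
have succ_uniq b c : A b c = 1 -> c = succ b.
  move=> Abc; apply/eqP; apply: contraT => c_neq.
  move: (no_branch b) => /existsPn /(_ c) /existsPn /(_ (succ b)).
  by rewrite c_neq Abc succP eqxx.
have succ_inj : injective succ.
  apply: in2T; apply/image_injP/eqP; apply: eq_card => j.
  have [i Aij] := exists_pred j; rewrite (succ_uniq _ _ Aij) inE.
  by apply: image_f.
apply/is_perm_mxP; exists (perm succ_inj); apply/matrixP => i j.
rewrite /perm_mx /row_perm !mxE permE.
case: eqP => [<-|ne]; first by rewrite succP.
by case: (A01 i j) => // /succ_uniq/esym.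
Qed.

Lemma admissible_word_extends t (u : nat -> 'I_N) :
  (forall i, (i < t)%N -> A (u i) (u i.+1) = 1) ->
  exists y : XA A, forall i, (i <= t)%N -> proj1_sig y i = u i.
Proof.
move=> uA; pose Y n := if (n <= t)%N then u n else iter (n - t) succ (u t).
have Y_in : in_XA A Y.
  move=> n; rewrite /Y; case: (ltngtP n t) => [lt_nt|lt_tn|->].
  - exact: uA.
  - by rewrite subSn ?(ltnW lt_tn) // iterS succP.
  - by rewrite subSnn succP.
by exists (exist _ Y Y_in) => i le_it; rewrite /= /Y le_it.
Qed.

Lemma exists_other_successor (x : XA A) K :
  exists t c, [/\ (K <= t)%N, A (proj1_sig x t) c = 1 & c != proj1_sig x t.+1].
Proof.
set X := proj1_sig x.
have [b [c1 [c2 [c12 Abc1 Abc2]]]] := exists_branching.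
have [n [_ /path_of_mx_pow_gt0 [w [w0 wn wA]]]] := Airr (X K) b.
pose c := if c1 == X (K + n).+1 then c2 else c1.
have [Abc c_neq] : A b c = 1 /\ c != X (K + n).+1.
  by rewrite /c; case: eqP => [<-|/eqP]; split; rewrite // eq_sym.
pose v i := if (i <= n)%N then w i else c.
have v_diverges : exists i, v i != X (K + i)%N.
  by exists n.+1; rewrite /v ltnn addnS.
case: (ex_minnP v_diverges) => -[|j]; first by rewrite /v w0 addn0 eqxx.
move=> vj_neq j_min.
have vj : v j = X (K + j)%N by apply/eqP/negP => /negP/j_min; rewrite ltnn.
have le_jn : (j <= n)%N by rewrite -ltnS; apply: j_min; rewrite /v ltnn addnS.
exists (K + j)%N, (v j.+1); split; rewrite ?leq_addr -?addnS //.
rewrite -vj /v le_jn; case: leqP => [le_nj|]; last exact: wA.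
have /eqP -> : j == n by rewrite eqn_leq le_jn le_nj.
by rewrite wn.
Qed.

Lemma exists_near_point_differing (x : XA A) K :
  exists (y : XA A) J, [/\ (K <= J)%N, agree J x y & proj1_sig y J <> proj1_sig x J].
Proof.
have [t [c [le_Kt Axc c_neq]]] := exists_other_successor x K.
pose u i := if (i <= t)%N then proj1_sig x i else c.
have [|y yu] := @admissible_word_extends t.+1 u.
  move=> i; rewrite ltnS /u => le_it; rewrite le_it; case: leqP => [le_ti|]; last first.
    by move=> _; apply: (proj2_sig x).
  by have /eqP -> : i == t by rewrite eqn_leq le_it le_ti.
exists y, t.+1; split; first exact: leqW.
- by move=> i lt_it; rewrite yu ?(ltnW lt_it) // /u -ltnS lt_it.
- by rewrite yu // /u ltnn; apply/eqP.
Qed.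

Lemma locally_eq_iter_shiftA (x : XA A) n e e' :
  (forall y, agree n x y -> iter e sA y = iter e' sA y) -> e = e'.
Proof.
wlog le_ee' : e e' / (e <= e')%N.
  move=> wlog_le near_eq; case: (leqP e e') => [le_ee'|lt_e'e].
    exact: wlog_le le_ee' near_eq.
  by apply/esym; apply: wlog_le; [exact: ltnW | move=> y /near_eq ->].
move=> near_eq; apply/eqP; rewrite eqn_leq le_ee' leqNgt; apply/negP => lt_ee'.
have [y [J [le_J xy y_neq]]] := exists_near_point_differing x (n + e').
have le_e'J : (e' <= J)%N := leq_trans (leq_addl _ _) le_J.
have coord z : agree n x z -> proj1_sig z (J - e' + e)%N = proj1_sig z J.
  by move=> xz; rewrite -iter_shiftA_val (near_eq z xz) iter_shiftA_val subnK.
have xy_n : agree n x y by apply: agree_le xy; apply: leq_trans (leq_addr _ _) le_J.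
apply: y_neq; rewrite -(coord y xy_n) -(coord x) //; symmetry; apply: xy.
by rewrite -ltn_subRL subKn // (leq_trans lt_ee').
Qed.

End ShiftSpace.

Section LocallyConstant.
Variables (N : nat) (A : 'M[int]_N).
Local Notation sA := (@shiftA N A).

Lemma cont_disc_pair T1 T2 (F : XA A -> T1) (G : XA A -> T2) :
  cont_disc F -> cont_disc G -> cont_disc (fun y => (F y, G y)).
Proof.
move=> Fc Gc x; have [[n1 F_eq] [n2 G_eq]] := (Fc x, Gc x).
exists (maxn n1 n2) => y xy.
by rewrite F_eq ?G_eq //; apply: agree_le xy; rewrite ?leq_maxl ?leq_maxr.
Qed.

Lemma cont_disc_dep T (a : XA A -> nat) (G : nat -> XA A -> T) :
  cont_disc a -> (forall n, cont_disc (G n)) -> cont_disc (fun y => G (a y) y).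
Proof.
move=> ac Gc x; have [[n1 a_eq] [n2 G_eq]] := (ac x, Gc (a x) x).
exists (maxn n1 n2) => y xy.
by rewrite a_eq ?G_eq //; apply: agree_le xy; rewrite ?leq_maxl ?leq_maxr.
Qed.

Lemma cont_disc_iter_shiftA T e (G : XA A -> T) :
  cont_disc G -> cont_disc (fun y => G (iter e sA y)).
Proof.
move=> Gc x; have [n G_eq] := Gc (iter e sA x).
by exists (n + e)%N => y /agree_iter_shiftA /G_eq.
Qed.

Lemma cont_disc_birkn (u : XA A -> nat) a : cont_disc u -> cont_disc (birkn sA u a).
Proof.
move=> uc; elim: a => [|a IHa] x; first by exists 0%N => y _; rewrite /birkn !big_ord0.
have [n eq_pair] := cont_disc_pair IHa (cont_disc_iter_shiftA a uc) x.
by exists n => y /eq_pair [ea eu]; rewrite !birknS ea eu.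
Qed.

End LocallyConstant.

Section ContinuousMaps.
Variables (N M : nat) (A : 'M[int]_N) (B : 'M[int]_M) (g : XA A -> XA B).
Hypothesis gc : cont_map g.

Lemma cont_disc_comp T (G : XA B -> T) : cont_disc G -> cont_disc (fun y => G (g y)).
Proof.
move=> Gc x; have [n G_eq] := Gc (g x); have [m g_agree] := gc x n.
by exists m => y /g_agree /G_eq.
Qed.

Lemma cont_map_comp_shiftA : cont_map (fun y => g (shiftA y)).
Proof.
move=> x m; have [n g_agree] := gc (shiftA x) m.
by exists (n + 1)%N => y /(@agree_iter_shiftA _ _ n 1) /g_agree.
Qed.

Lemma cont_disc_birkn_comp (a : XA A -> nat) (u : XA B -> nat) :
  cont_disc a -> cont_disc u -> cont_disc (fun y => birkn (@shiftA M B) u (a y) (g y)).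
Proof.
move=> ac uc; apply: (cont_disc_dep (G := fun n y => birkn _ u n (g y))) => // n.
exact: cont_disc_comp (cont_disc_birkn n uc).
Qed.

End ContinuousMaps.

Section OrbitEquivalence.
Variables (N M : nat) (A : 'M[int]_N) (B : 'M[int]_M).
Hypotheses (A01 : zero_one_mx A) (Airr : irreducible_mx A) (Anp : ~~ is_perm_mx A).
Variables (h : XA A -> XA B) (hinv : XA B -> XA A) (k l : XA A -> nat) (k' l' : XA B -> nat).
Hypotheses (hK : cancel h hinv) (hc : cont_map h).
Hypotheses (kc : cont_disc k) (lc : cont_disc l) (k'c : cont_disc k') (l'c : cont_disc l').
Hypothesis orbit_eq : forall x,
  iter (k x) (@shiftA M B) (h (shiftA x)) = iter (l x) (@shiftA M B) (h x).
Hypothesis orbit_eq' : forall y,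
  iter (k' y) (@shiftA N A) (hinv (shiftA y)) = iter (l' y) (@shiftA N A) (hinv y).
Local Notation sA := (@shiftA N A).
Local Notation sB := (@shiftA M B).

Lemma birkn_balance x :
  (birkn sB l' (l x) (h x) + birkn sB k' (k x) (h (shiftA x)) =
   (birkn sB k' (l x) (h x) + birkn sB l' (k x) (h (shiftA x))).+1)%N.
Proof.
have counts_c : cont_disc (fun y =>
    ((birkn sB l' (l y) (h y), birkn sB k' (l y) (h y)),
     (birkn sB l' (k y) (h (shiftA y)), birkn sB k' (k y) (h (shiftA y))))).
  have hSc := cont_map_comp_shiftA hc.
  by do !apply: cont_disc_pair; apply: cont_disc_birkn_comp.
have [n counts_eq] := counts_c x.
apply: (locally_eq_iter_shiftA A01 Airr Anp (x := x) (n := n)) => y xy.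
have := iter_birkn_loop orbit_eq orbit_eq' hK y.
by case: (counts_eq y xy) => -> -> -> ->.
Qed.

Lemma Psi_orbitK g : Psi sA sB h k l (Psi sB sA hinv k' l' g) =1 g.
Proof. by move=> x; apply: Psi_cancel orbit_eq orbit_eq' hK _ _ (birkn_balance x). Qed.

End OrbitEquivalence.

Theorem lemma4p5 (N M : nat) (A : 'M[int]_N) (B : 'M[int]_M)
  (HN : (1 < N)%N) (HM : (1 < M)%N)
  (A01 : zero_one_mx A) (B01 : zero_one_mx B)
  (Airr : irreducible_mx A) (Birr : irreducible_mx B)
  (Anp : ~~ is_perm_mx A) (Bnp : ~~ is_perm_mx B)
  (h : XA A -> XA B) (hinv : XA B -> XA A)
  (hK : cancel h hinv) (hinvK : cancel hinv h)
  (hc : cont_map h) (hinvc : cont_map hinv)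
  (k1 l1 : XA A -> nat) (k2 l2 : XA B -> nat)
  (k1c : cont_disc k1) (l1c : cont_disc l1)
  (k2c : cont_disc k2) (l2c : cont_disc l2)
  (E1 : forall x : XA A,
     iter (k1 x) (@shiftA M B) (h (shiftA x)) = iter (l1 x) (@shiftA M B) (h x))
  (E2 : forall y : XA B,
     iter (k2 y) (@shiftA N A) (hinv (shiftA y)) = iter (l2 y) (@shiftA N A) (hinv y)) :
  forall (m : nat) (f : XA B -> int) (g : XA A -> int),
    cont_disc f -> cont_disc g ->
    (forall x : XA A,
      birk (@shiftA N A) (Psi (@shiftA N A) (@shiftA M B) h k1 l1 f) m x
        = birk (@shiftA M B) f (birkn (@shiftA N A) l1 m x) (h x)
          - birk (@shiftA M B) f (birkn (@shiftA N A) k1 m x) (h (iter m (@shiftA N A) x))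
      /\
      birk (@shiftA N A) g m x
        = birk (@shiftA M B) (Psi (@shiftA M B) (@shiftA N A) hinv k2 l2 g)
            (birkn (@shiftA N A) l1 m x) (h x)
          - birk (@shiftA M B) (Psi (@shiftA M B) (@shiftA N A) hinv k2 l2 g)
            (birkn (@shiftA N A) k1 m x) (h (iter m (@shiftA N A) x)))
    /\
    (forall y : XA B,
      birk (@shiftA M B) (Psi (@shiftA M B) (@shiftA N A) hinv k2 l2 g) m y
        = birk (@shiftA N A) g (birkn (@shiftA M B) l2 m y) (hinv y)
          - birk (@shiftA N A) g (birkn (@shiftA M B) k2 m y) (hinv (iter m (@shiftA M B) y))
      /\
      birk (@shiftA M B) f m y
        = birk (@shiftA N A) (Psi (@shiftA N A) (@shiftA M B) h k1 l1 f)
            (birkn (@shiftA M B) l2 m y) (hinv y)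
          - birk (@shiftA N A) (Psi (@shiftA N A) (@shiftA M B) h k1 l1 f)
            (birkn (@shiftA M B) k2 m y) (hinv (iter m (@shiftA M B) y))).
Proof.
move=> m f g _ _.
have PsiK1 := Psi_orbitK A01 Airr Anp hK hc k1c l1c k2c l2c E1 E2.
have PsiK2 := Psi_orbitK B01 Birr Bnp hinvK hinvc k2c l2c k1c l1c E2 E1.
split=> [x|y]; split.
- exact: (birk_Psi E1).
- by rewrite -(birk_Psi E1); apply: eq_birk => z; rewrite PsiK1.
- exact: (birk_Psi E2).
- by rewrite -(birk_Psi E2); apply: eq_birk => z; rewrite PsiK2.
Qed.
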